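(* Let $\vec{\alpha}=\langle\alpha_s:s\in[\mathbb{N}]^{<\infty}\rangle$ be a sequence of nonstandard hypernatural numbers. Then $([\mathbb{N}]^\infty,\vec{\alpha},\subseteq)$ is an $\vec{\alpha}$-Ramsey space: a set $\mathcal{X}\subseteq[\mathbb{N}]^\infty$ is $\vec{\alpha}$-Ramsey if and only if it has the Baire property with respect to the $\vec{\alpha}$-Ellentuck topology, and $\mathcal{X}$ is $\vec{\alpha}$-Ramsey null if and only if it is meager with respect to the $\vec{\alpha}$-Ellentuck topology.
   Context: Setting (Alpha-Theory of Benci–Di Nasso): ZFC together with a new symbol $\alpha$ satisfying: ($\alpha$1) every sequence $\varphi=\langle\varphi_i:i\in\mathbb{N}\rangle$ has a unique ideal value $\varphi[\alpha]$; ($\alpha$2) if $\varphi[\alpha]=\psi[\alpha]$ and $f\circ\varphi$, $f\circ\psi$ make sense then $(f\circ\varphi)[\alpha]=(f\circ\psi)[\alpha]$; ($\alpha$3) constant real sequences $r$ have ideal value $r$, and $\langle i\rangle$ has ideal value $\alpha\notin\mathbb{N}$; ($\alpha$4) if $\vartheta_i=\{\varphi_i,\psi_i\}$ then $\vartheta[\alpha]=\{\varphi[\alpha],\psi[\alpha]\}$; ($\alpha$5) the constant sequence $\emptyset$ has ideal value $\emptyset$, and for nonempty $\psi_i$, $\psi[\alpha]=\{\vartheta[\alpha]:\vartheta_i\in\psi_i\ \forall i\}$. ${}^*A$ is the ideal value of the constant sequence $A$; ${}^*\mathbb{N}\setminus\mathbb{N}$ is the set of nonstandard hypernatural numbers.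 $[X]^{<\infty}$, $[X]^\infty$: finite, resp. infinite, subsets of $X\subseteq\mathbb{N}$. For finite $s$, $s\sqsubseteq X$ means $s=\{j\in X:j\le i\}$ for some $i$. A tree on $\mathbb{N}$ is a nonempty $T\subseteq[\mathbb{N}]^{<\infty}$ closed under $\sqsubseteq$-initial segments; $[T]=\{X\in[\mathbb{N}]^\infty:$ every finite $s\sqsubseteq X$ is in $T\}$; stem $st(T)$ = $\sqsubseteq$-maximal $s\in T$ comparable with all elements of $T$; $T/s=\{t\in T:s\sqsubseteq t\}$. An $\vec{\alpha}$-tree is a tree $T$ with a stem, $T/st(T)\neq\emptyset$, and $s\cup\{\alpha_s\}\in{}^*T$ for all $s\in T/st(T)$. $\mathcal{X}\subseteq[\mathbb{N}]^\infty$ is $\vec{\alpha}$-Ramsey if for every $\vec{\alpha}$-tree $T$ there is an $\vec{\alpha}$-tree $S\subseteq T$ with $st(S)=st(T)$ and $[S]\subseteq\mathcal{X}$ or $[S]\cap\mathcal{X}=\emptyset$; $\vec{\alpha}$-Ramsey null if always $[S]\cap\mathcal{X}=\emptyset$ can be achieved. The $\vec{\alpha}$-Ellentuck topology on $[\mathbb{N}]^\infty$ is the topology with basis $\{[T]:T\text{ an }\vec{\alpha}\text{-tree}\}$. *)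

(* Alpha-Theory is modelled by its standard ZFC model:
   the ultrapower of nat by a nonprincipal ultrafilter U on nat
   (alpha = [identity], U = { A | alpha \in *A }).  A hypernatural number is
   represented by a sequence f : nat -> nat (its class mod U). *)
From mathcomp Require Import all_boot.
Set Implicit Arguments. Unset Strict Implicit. Unset Printing Implicit Defensive.

Definition ultrafilter (U : (nat -> Prop) -> Prop) : Prop :=
  [/\ U (fun _ => True), ~ U (fun _ => False),
      (forall A B : nat -> Prop, U A -> (forall i, A i -> B i) -> U B),
      (forall A B : nat -> Prop, U A -> U B -> U (fun i => A i /\ B i))
    & (forall A : nat -> Prop, U A \/ U (fun i => ~ A i))].

Definition nonprincipal_ultrafilter (U : (nat -> Prop) -> Prop) : Prop :=
  ultrafilter U /\ forall n : nat, U (fun i => i <> n).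

Definition nonstandard (U : (nat -> Prop) -> Prop) (f : nat -> nat) : Prop :=
  forall n : nat, U (fun i => f i <> n).

(* finite subsets are represented canonically by strictly increasing lists *)
Definition is_fin (s : seq nat) : Prop := sorted ltn s.

Definition infinite_set (X : nat -> bool) : Prop :=
  forall m, exists n, m <= n /\ X n.

Definition iseg (s : seq nat) (X : nat -> bool) : Prop :=
  exists k : nat, forall j, (j \in s) = X j && (j < k).

Definition iseg_fin (s t : seq nat) : Prop := iseg s (fun j => j \in t).

Definition tree (T : seq nat -> Prop) : Prop :=
  [/\ exists t, T t,
      (forall t, T t -> is_fin t)
    & (forall s t, T t -> is_fin s -> iseg_fin s t -> T s)].

Definition body (T : seq nat -> Prop) (X : nat -> bool) : Prop :=
  infinite_set X /\ forall s, is_fin s -> iseg s X -> T s.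

Definition comparable_all (T : seq nat -> Prop) (s : seq nat) : Prop :=
  forall t, T t -> iseg_fin s t \/ iseg_fin t s.

Definition is_stem (T : seq nat -> Prop) (s : seq nat) : Prop :=
  [/\ T s, comparable_all T s
    & forall s', T s' -> comparable_all T s' -> iseg_fin s s' -> s' = s].

Definition restr (T : seq nat -> Prop) (s : seq nat) : seq nat -> Prop :=
  fun t => T t /\ iseg_fin s t.

Definition Tmem (T : seq nat -> Prop) (A : nat -> Prop) : Prop :=
  exists t, [/\ is_fin t, (forall j, j \in t <-> A j) & T t].

(* s U {alpha_s} \in *T, where alpha_s = [a s]_U; by Los' theorem *)
Definition star_mem_ext (U : (nat -> Prop) -> Prop) (T : seq nat -> Prop)
  (s : seq nat) (f : nat -> nat) : Prop :=
  U (fun i => Tmem T (fun j => j \in s \/ j = f i)).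

Definition alpha_tree (U : (nat -> Prop) -> Prop) (a : seq nat -> nat -> nat)
  (T : seq nat -> Prop) : Prop :=
  tree T /\ exists st, [/\ is_stem T st, (exists t, restr T st t)
    & forall s, restr T st s -> star_mem_ext U T s (a s)].

Definition alpha_Ramsey U a (XX : (nat -> bool) -> Prop) : Prop :=
  forall T, alpha_tree U a T ->
    exists S, [/\ alpha_tree U a S, (forall t, S t -> T t),
      (exists st, is_stem T st /\ is_stem S st)
    & (forall X, body S X -> XX X) \/ (forall X, body S X -> ~ XX X)].

Definition alpha_Ramsey_null U a (XX : (nat -> bool) -> Prop) : Prop :=
  forall T, alpha_tree U a T ->
    exists S, [/\ alpha_tree U a S, (forall t, S t -> T t),
      (exists st, is_stem T st /\ is_stem S st)
    & (forall X, body S X -> ~ XX X)].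

Definition aE_open U a (O : (nat -> bool) -> Prop) : Prop :=
  (forall X, O X -> infinite_set X) /\
  forall X, O X -> exists T, [/\ alpha_tree U a T, body T X
                                & forall Y, body T Y -> O Y].

Definition aE_closure U a (N : (nat -> bool) -> Prop) : (nat -> bool) -> Prop :=
  fun X => infinite_set X /\
    forall O, aE_open U a O -> O X -> exists Y, O Y /\ N Y.

Definition aE_nowhere_dense U a (N : (nat -> bool) -> Prop) : Prop :=
  forall O, aE_open U a O -> (forall X, O X -> aE_closure U a N X) ->
    forall X, ~ O X.

Definition aE_meager U a (M : (nat -> bool) -> Prop) : Prop :=
  exists Ns : nat -> (nat -> bool) -> Prop,
    (forall n, aE_nowhere_dense U a (Ns n)) /\
    forall X, M X -> exists n, Ns n X.

Definition aE_Baire U a (XX : (nat -> bool) -> Prop) : Prop :=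
  exists O, aE_open U a O /\
    aE_meager U a (fun X => (XX X /\ ~ O X) \/ (O X /\ ~ XX X)).

From mathcomp Require Import all_boot zify.
From Stdlib Require Import Classical ClassicalEpsilon.
Set Implicit Arguments. Unset Strict Implicit. Unset Printing Implicit Defensive.

(* Finite sets are increasing lists, so initial segments are list prefixes.
   Everything rests on grafting: attaching to each node v above t of an alpha-tree an alpha-tree
   through v, the diagonal intersection is again an alpha-tree, with stem t.
   Call a node accepted if some alpha-subtree through it has its body inside an open
   set O. A node with U-many accepted successors is accepted, so if the stem is not
   accepted, the non-accepted nodes form an alpha-subtree; its body misses O, because
   a branch in O has an accepted initial segment. Hence open sets are alpha-Ramsey and
   nowhere dense sets are alpha-Ramsey null, and a diagonal graft that attaches to the
   nodes of length |st| + n subtrees avoiding N_n shows that the alpha-Ramsey null sets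
   form a sigma-ideal; the equivalences then follow as for Ellentuck's theorem. *)

Section Prefix.
Variable T : eqType.
Implicit Types s u v w : seq T.

Definition prefix_comparable u v := prefix u v || prefix v u.

Lemma prefix_comparableC u v : prefix_comparable u v = prefix_comparable v u.
Proof. exact: orbC. Qed.

Lemma prefix_antisym u v : prefix u v -> prefix v u -> u = v.
Proof.
move=> uv vu; move: uv; rewrite prefixE => /eqP <-.
by rewrite take_oversize // size_prefix.
Qed.

Lemma prefix_comparableW u v w : prefix u w -> prefix v w -> prefix_comparable u v.
Proof.
rewrite /prefix_comparable !prefixE => /eqP uw /eqP vw.
case: (leqP (size u) (size v)) => h.
  by apply/orP; left; rewrite -{1}vw take_takel // uw.
by apply/orP; right; rewrite -{1}uw take_takel ?vw // ltnW.
Qed.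

Lemma prefix_comparable_size u v :
  prefix_comparable u v -> size u <= size v -> prefix u v.
Proof.
case/orP=> // vu uv; suff -> : u = v by exact: prefix_refl.
by move: vu; rewrite prefixE => /eqP <-; rewrite take_oversize.
Qed.

Lemma size_prefix_lt u v : prefix u v -> v <> u -> size u < size v.
Proof.
move=> uv vu; rewrite ltnNge; apply/negP => le_vu; apply: vu.
have vu' : prefix_comparable v u by rewrite /prefix_comparable uv orbT.
exact: prefix_antisym (prefix_comparable_size vu' le_vu) uv.
Qed.

Lemma prefix_rconsE u s x : prefix u (rcons s x) -> u = rcons s x \/ prefix u s.
Proof.
move=> h; move: (size_prefix h); rewrite size_rcons leq_eqVlt => /orP[/eqP e|l].
  by left; move: h; rewrite prefixE e -(size_rcons s x) take_size => /eqP.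
by right; move: h; rewrite !prefixE -cats1 takel_cat.
Qed.

Lemma prefix_rcons_comparable u s x :
  prefix s u -> u <> s -> prefix_comparable u (rcons s x) -> prefix (rcons s x) u.
Proof.
move=> su us /orP[|//] /prefix_rconsE[->|us']; first exact: prefix_refl.
by case: us; apply: prefix_antisym.
Qed.

Lemma prefix_take_leq u v n : prefix u v -> size u <= n -> prefix u (take n v).
Proof. by rewrite !prefixE => /eqP uv un; rewrite take_takel // uv. Qed.

Lemma mem_prefix u v x : prefix u v -> x \in u -> x \in v.
Proof. by move=> /prefixP[r ->] xu; rewrite mem_cat xu. Qed.

End Prefix.

Lemma filter_ltn_prefix (t : seq nat) k : sorted ltn t -> prefix [seq j <- t | j < k] t.
Proof.
elim: t => //= x t IH xt.
case: ifP => xk; first by rewrite eqxx (IH (path_sorted xt)).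
suff -> : [seq j <- t | j < k] = [::] by [].
apply/eqP; rewrite -[_ == _]negbK -has_filter -all_predC.
by apply: sub_all (order_path_min ltn_trans xt) => j /=; lia.
Qed.

Lemma iseg_finP (s t : seq nat) : is_fin s -> is_fin t -> iseg_fin s t <-> prefix s t.
Proof.
move=> s_fin t_fin; split.
  move=> [k sk]; suff -> : s = [seq j <- t | j < k] by exact: filter_ltn_prefix.
  apply: (irr_sorted_eq ltn_trans ltnn) => // [|j].
    exact: (sorted_filter ltn_trans).
  by rewrite mem_filter sk andbC.
elim: t s t_fin {s_fin} => [|x t IH] [|y s] //= xt; try by exists 0 => j; rewrite andbF.
move=> /andP[/eqP -> st]; have [k sk] := IH s (path_sorted xt) st.
have x_min := order_path_min ltn_trans xt.
exists (maxn k x.+1) => j; rewrite !in_cons sk.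
case: (eqVneq j x) => [->|jx] /=; first by rewrite leq_max ltnSn orbT.
case jt: (j \in t) => //=; have := allP x_min j jt => /= xj.
by apply/idP/idP; rewrite leq_max; [move=> -> | case/orP => //]; lia.
Qed.

Definition initseg (X : nat -> bool) k := [seq j <- iota 0 k | X j].

Lemma initseg_fin X k : is_fin (initseg X k).
Proof. exact: (sorted_filter ltn_trans _ (iota_ltn_sorted 0 k)). Qed.

Lemma initseg_iseg X k : iseg (initseg X k) X.
Proof. by exists k => j; rewrite mem_filter mem_iota. Qed.

Lemma isegE X s : is_fin s -> iseg s X -> exists k, s = initseg X k.
Proof.
move=> s_fin [k sk]; exists k.
apply: (irr_sorted_eq ltn_trans ltnn) => //; first exact: initseg_fin.
by move=> j; rewrite sk mem_filter mem_iota.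
Qed.

Lemma prefix_initseg X k k' : k <= k' -> prefix (initseg X k) (initseg X k').
Proof. by move=> kk'; rewrite /initseg -(subnKC kk') iotaD filter_cat prefix_prefix. Qed.

Lemma size_initseg_unbounded X : infinite_set X -> forall m, exists k, m <= size (initseg X k).
Proof.
move=> X_inf; elim=> [|m [k mk]]; first by exists 0.
have [n [kn Xn]] := X_inf k; exists n.+1.
have := size_prefix (prefix_initseg X kn).
rewrite /initseg -[n.+1]addn1 iotaD filter_cat size_cat /= Xn /=.
by move: mk; rewrite /initseg; lia.
Qed.

Section Ultrafilter.
Variable U : (nat -> Prop) -> Prop.
Hypothesis HU : ultrafilter U.

Lemma filterS (A B : nat -> Prop) : U A -> (forall i, A i -> B i) -> U B.
Proof. by case: HU => _ _ + _ _; apply. Qed.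

Lemma filterI (A B : nat -> Prop) : U A -> U B -> U (fun i => A i /\ B i).
Proof. by case: HU => _ _ _ + _; apply. Qed.

Lemma filterT (A : nat -> Prop) : (forall i, A i) -> U A.
Proof. by case: HU => UT _ _ _ _ hA; apply: filterS UT _. Qed.

Lemma filter_compl (A : nat -> Prop) : U A \/ U (fun i => ~ A i).
Proof. by case: HU. Qed.

Lemma filter_ex (A : nat -> Prop) : U A -> exists i, A i.
Proof.
move=> UA; apply: NNPP => noA; case: HU => _ + _ _ _; apply.
by apply: filterS UA _ => i Ai; apply: noA; exists i.
Qed.

Lemma filter_forall_leq (P : nat -> nat -> Prop) N :
  (forall n, n <= N -> U (P n)) -> U (fun i => forall n, n <= N -> P n i).
Proof.
elim: N P => [|N IH] P UP.
  by apply: filterS (UP 0 (leqnn 0)) _ => i P0i n; rewrite leqn0 => /eqP ->.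
apply: filterS (filterI (IH P (fun n le_nN => UP n (leqW le_nN))) (UP N.+1 (leqnn _))) _.
by move=> i [PNi PSNi] n; rewrite leq_eqVlt => /orP[/eqP -> | /PNi].
Qed.

Lemma nonstandard_gt f : nonstandard U f -> forall m, U (fun i => m < f i).
Proof.
move=> f_ns; elim=> [|m IH]; first by apply: filterS (f_ns 0) _ => i; lia.
by apply: filterS (filterI IH (f_ns m.+1)) _ => i; lia.
Qed.

Lemma nonstandard_two_values f (P : nat -> Prop) :
  nonstandard U f -> U (fun i => P (f i)) -> exists x y, [/\ x <> y, P x & P y].
Proof.
move=> f_ns UP; have [i Pi] := filter_ex UP.
have [j [Pj fji]] := filter_ex (filterI UP (f_ns (f i))).
by exists (f i), (f j); split => // e; apply: fji.
Qed.

End Ultrafilter.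

Definition below (s : seq nat) x := all (fun j => j < x) s.

Lemma below_sumn (s : seq nat) x : sumn s < x -> below s x.
Proof.
move=> lt_sx; apply/allP => j js; apply: leq_ltn_trans lt_sx.
by move: js; elim: s => //= y s IH; rewrite in_cons => /orP[/eqP ->|/IH]; lia.
Qed.

Lemma rcons_fin s x : is_fin s -> below s x -> is_fin (rcons s x).
Proof.
case: s => // y s; rewrite /is_fin /= rcons_path => -> /=.
by move=> ysx; apply: (allP (ysx : below (y :: s) x)); apply: mem_last.
Qed.

Lemma Tmem_rcons (T : seq nat -> Prop) s x : is_fin s -> below s x ->
  Tmem T (fun j => j \in s \/ j = x) <-> T (rcons s x).
Proof.
move=> s_fin sx; have sx_fin := rcons_fin s_fin sx.
have memE j : (j \in rcons s x) <-> (j \in s \/ j = x).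
  rewrite mem_rcons in_cons; split => [/orP[/eqP|]|[->|->]]; rewrite ?eqxx ?orbT //.
  - by right.
  - by left.
split=> [[t [t_fin tE Tt]]|Tsx]; last by exists (rcons s x); split.
suff <- : t = rcons s x by [].
apply: (irr_sorted_eq ltn_trans ltnn) => // j.
by apply/idP/idP => [/tE/memE | /memE/tE].
Qed.

Section Trees.
Implicit Types (T S : seq nat -> Prop) (s t u v : seq nat).

Lemma tree_fin T t : tree T -> T t -> is_fin t.
Proof. by case=> _ + _; apply. Qed.

Lemma tree_prefix T s t : tree T -> T t -> prefix s t -> T s.
Proof.
move=> [_ T_fin T_cl] Tt st; have t_fin := T_fin t Tt.
have s_fin : is_fin s by move: st; rewrite prefixE => /eqP <-; apply: take_sorted.
by apply: (T_cl s t Tt s_fin); apply/iseg_finP.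
Qed.

Lemma comparable_allP T s : tree T -> T s ->
  comparable_all T s <-> forall u, T u -> prefix_comparable u s.
Proof.
move=> T_tree Ts; have s_fin := tree_fin T_tree Ts.
split=> [cmp_s u Tu | cmp_s u Tu]; have u_fin := tree_fin T_tree Tu.
  case: (cmp_s u Tu) => [/(iseg_finP s_fin u_fin) | /(iseg_finP u_fin s_fin)] h;
  by rewrite /prefix_comparable h ?orbT.
case/orP: (cmp_s u Tu) => h; [right | left].
  exact/(iseg_finP u_fin s_fin).
exact/(iseg_finP s_fin u_fin).
Qed.

Lemma stem_mem T st : is_stem T st -> T st.
Proof. by case. Qed.

Lemma stem_comparable T st u : tree T -> is_stem T st -> T u -> prefix_comparable u st.
Proof. by move=> T_tree [Tst /(comparable_allP T_tree Tst) + _]; apply. Qed.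

Lemma stem_unique T s s' : is_stem T s -> is_stem T s' -> s = s'.
Proof.
move=> [Ts cmp_s max_s] [Ts' cmp_s' max_s'].
by case: (cmp_s s' Ts') => [/(max_s s' Ts' cmp_s') | /(max_s' s Ts cmp_s)].
Qed.

Lemma stem_intro S t x y : tree S -> S t -> (forall u, S u -> prefix_comparable u t) ->
  x <> y -> S (rcons t x) -> S (rcons t y) -> is_stem S t.
Proof.
move=> S_tree St cmp_t xy Stx Sty; have t_fin := tree_fin S_tree St.
split=> //; first by apply/comparable_allP.
move=> s' Ss' /(comparable_allP S_tree Ss') cmp_s' /(iseg_finP t_fin (tree_fin S_tree Ss')) ts'.
apply: NNPP => s't.
have s'_cmp u : S u -> prefix_comparable s' u by rewrite prefix_comparableC; apply: cmp_s'.
have px := prefix_rcons_comparable ts' s't (s'_cmp _ Stx).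
have py := prefix_rcons_comparable ts' s't (s'_cmp _ Sty).
have cmp_xy := prefix_comparableW px py.
have cmp_yx : prefix_comparable (rcons t y) (rcons t x) by rewrite prefix_comparableC.
have /(congr1 (last 0)) : rcons t x = rcons t y.
  by apply: prefix_antisym; apply: prefix_comparable_size; rewrite ?size_rcons.
by rewrite !last_rcons.
Qed.

End Trees.

Section Bodies.
Implicit Types (T S : seq nat -> Prop) (X : nat -> bool).

Lemma body_initseg T X k : body T X -> T (initseg X k).
Proof. by case=> _; apply; [apply: initseg_fin | apply: initseg_iseg]. Qed.

Lemma body_sub S T X : (forall u, S u -> T u) -> body S X -> body T X.
Proof. by move=> ST [X_inf SX]; split=> // s s_fin Xs; apply/ST/SX. Qed.

Lemma body_initseg_stem T st X : tree T -> is_stem T st -> body T X ->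
  forall m, exists k, m <= size (initseg X k) /\ prefix st (initseg X k).
Proof.
move=> T_tree Tst TX m; have [X_inf _] := TX.
have [k] := size_initseg_unbounded X_inf (maxn m (size st)); rewrite geq_max => /andP[mk stk].
exists k; split=> //; apply: prefix_comparable_size stk.
by rewrite prefix_comparableC; apply: stem_comparable T_tree Tst (body_initseg k TX).
Qed.

Lemma body_above T X v k : tree T -> infinite_set X -> prefix v (initseg X k) -> T v ->
  (forall k', prefix v (initseg X k') -> T (initseg X k')) -> body T X.
Proof.
move=> T_tree X_inf vk Tv T_above; split=> // s s_fin /(isegE s_fin)[k' ->].
have : prefix_comparable (initseg X k') v.
  apply: (@prefix_comparableW _ _ _ (initseg X (maxn k k'))).
    by apply: prefix_initseg; apply: leq_maxr.
  by apply: prefix_trans vk (prefix_initseg X (leq_maxl _ _)).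
by case/orP=> [/(tree_prefix T_tree Tv) | /T_above].
Qed.

(* The element added to [b n] exceeds n, so j lies on the limit branch
   iff [j \in b j.+1]. *)
Lemma chain_body T (b : nat -> seq nat) : tree T -> (forall n, T (b n)) ->
  (forall n, exists2 x, n < x & b n.+1 = rcons (b n) x) -> exists X, body T X.
Proof.
move=> T_tree Tb b_ext.
have b_mono n m : n <= m -> prefix (b n) (b m).
  elim: m => [|m IH]; first by rewrite leqn0 => /eqP ->; apply: prefix_refl.
  rewrite leq_eqVlt => /orP[/eqP -> | /IH nm]; first exact: prefix_refl.
  by have [x _ ->] := b_ext m; apply: prefix_trans nm (prefix_rcons _ _).
have b_mem n j : j \in b n -> j \in b j.+1.
  elim: n => [|n IH] jn; first exact: mem_prefix (b_mono 0 j.+1 isT) jn.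
  have [x nx bE] := b_ext n; move: (jn); rewrite bE mem_rcons in_cons.
  by case/orP=> [/eqP jx | /IH //]; apply: mem_prefix (b_mono n.+1 j.+1 _) jn; lia.
exists (fun j => j \in b j.+1); split.
  move=> m; have [x mx bE] := b_ext m; exists x; split; first exact: ltnW.
  by apply: (b_mem m.+1); rewrite bE mem_rcons mem_head.
move=> s s_fin [k sk]; have [_ _ T_cl] := T_tree; apply: (T_cl s (b k) (Tb k) s_fin).
exists k => j; rewrite sk; case: (ltnP j k) => [jk | _]; rewrite ?andbF ?andbT //.
by apply/idP/idP => [/(mem_prefix (b_mono _ _ jk)) | /b_mem].
Qed.

End Bodies.

Section AlphaTrees.
Variables (U : (nat -> Prop) -> Prop) (a : seq nat -> nat -> nat).
Hypothesis HU : ultrafilter U.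
Hypothesis Ha : forall s, is_fin s -> nonstandard U (a s).
Implicit Types (T S : seq nat -> Prop) (s t u v : seq nat).

(* By Los' theorem, [s U {alpha_s} \in *T] means that [s ++ [:: a s i]] lies in
   T for U-almost all i. *)
Definition alpha_tree_at T st :=
  [/\ tree T, is_stem T st &
     forall s, T s -> prefix st s -> U (fun i => T (rcons s (a s i)))].

Lemma filter_below s : is_fin s -> U (fun i => below s (a s i)).
Proof.
move=> s_fin; apply: (filterS HU) (nonstandard_gt HU (Ha s_fin) (sumn s)) _.
by move=> i /below_sumn.
Qed.

Lemma star_mem_extE T s : is_fin s ->
  U (fun i => T (rcons s (a s i))) <-> star_mem_ext U T s (a s).
Proof.
move=> s_fin; split=> Us; apply: (filterS HU) (filterI HU Us (filter_below s_fin)) _;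
  by move=> i [Ti /(Tmem_rcons T s_fin) Tmem_i]; apply/Tmem_i.
Qed.

Lemma alpha_treeP T : alpha_tree U a T <-> exists st, alpha_tree_at T st.
Proof.
split=> [[T_tree [st [Tst _ ext]]] | [st [T_tree Tst ext]]].
  have st_fin := tree_fin T_tree (stem_mem Tst).
  exists st; split=> // s Ts st_s; have s_fin := tree_fin T_tree Ts.
  by apply/star_mem_extE => //; apply: ext; split=> //; apply/iseg_finP.
have st_fin := tree_fin T_tree (stem_mem Tst).
split=> //; exists st; split=> //.
  by exists st; split; [exact: stem_mem Tst | apply/iseg_finP => //; apply: prefix_refl].
move=> s [Ts st_s]; have s_fin := tree_fin T_tree Ts.
by apply/star_mem_extE => //; apply: ext => //; apply/(iseg_finP st_fin s_fin).
Qed.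

Lemma alpha_tree_atW T st : alpha_tree_at T st -> alpha_tree U a T.
Proof. by move=> AT; apply/alpha_treeP; exists st. Qed.

Lemma alpha_tree_stem T st : alpha_tree U a T -> is_stem T st -> alpha_tree_at T st.
Proof.
by move=> /alpha_treeP[st' [T_tree Tst' ext]] Tst; rewrite (stem_unique Tst Tst'); split.
Qed.

(* The diagonal intersection of the trees [R v] attached to the nodes v above t,
   all of which are required to satisfy G. *)
Definition graft T t (G : seq nat -> Prop) (R : seq nat -> seq nat -> Prop) u :=
  [/\ T u, prefix_comparable u t & forall v, prefix t v -> prefix v u -> G v /\ R v u].

Definition alpha_subtree_at T (G Rv : seq nat -> Prop) v :=
  [/\ Rv v, (forall u w, Rv u -> prefix w u -> prefix v w -> Rv w)
    & forall s, Rv s -> prefix v s -> T s -> G s -> U (fun i => Rv (rcons s (a s i)))].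

Lemma graft_sub T t G R u : graft T t G R u -> T u.
Proof. by case. Qed.

Lemma alpha_subtree_at_all T G v : alpha_subtree_at T G (fun=> True) v.
Proof. by split=> // *; apply: (filterT HU). Qed.

Section Graft.
Variables (T G : seq nat -> Prop) (R : seq nat -> seq nat -> Prop) (st t : seq nat).
Hypotheses (AT : alpha_tree_at T st) (Tt : T t) (st_t : prefix st t) (Gt : G t).
Hypothesis G_ext : forall s, T s -> prefix t s -> G s -> U (fun i => G (rcons s (a s i))).
Hypothesis R_sub : forall v, T v -> prefix t v -> G v -> alpha_subtree_at T G (R v) v.

Let S := graft T t G R.

Lemma graft_root : S t.
Proof.
split=> //; first by rewrite /prefix_comparable prefix_refl.
move=> v tv vt; rewrite -(prefix_antisym tv vt); split=> //.
by case: (R_sub Tt (prefix_refl t) Gt).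
Qed.

Lemma graft_tree : tree S.
Proof.
have [T_tree _ _] := AT.
split; [by exists t; apply: graft_root | by move=> u /graft_sub/(tree_fin T_tree) |].
move=> s u [Tu cmp_u Ru] s_fin /(iseg_finP s_fin (tree_fin T_tree Tu)) su.
split; first exact: tree_prefix T_tree Tu su.
- case/orP: cmp_u => [ut | tu]; first by rewrite /prefix_comparable (prefix_trans su ut).
  exact: prefix_comparableW su tu.
- move=> v tv vs; have [Gv Rvu] := Ru v tv (prefix_trans vs su); split=> //.
  case: (R_sub (tree_prefix T_tree Tu (prefix_trans vs su)) tv Gv) => _ R_cl _.
  exact: R_cl Rvu su vs.
Qed.

(* Finitely many nodes v lie between t and s, so U-almost every successor of s
   stays in all the trees [R v] at once. *)
Lemma filter_graft_ext s : S s -> prefix t s ->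
  U (fun i => forall v, prefix t v -> prefix v s -> R v (rcons s (a s i))).
Proof.
move=> [Ts _ Rs] ts; have [T_tree _ _] := AT.
have Gs := (Rs s ts (prefix_refl s)).1.
pose P n i := size t <= n -> R (take n s) (rcons s (a s i)).
have UP : U (fun i => forall n, n <= size s -> P n i).
  apply: (filter_forall_leq HU) => n _; case: (leqP (size t) n) => [tn | nt]; last first.
    by apply: (filterT HU) => i; rewrite /P leqNgt nt.
  have t_v := prefix_take_leq ts tn; have v_s := prefix_take s n.
  have [Gv Rv] := Rs _ t_v v_s.
  case: (R_sub (tree_prefix T_tree Ts v_s) t_v Gv) => _ _ /(_ s Rv v_s Ts Gs) UR.
  by apply: (filterS HU) UR _ => i Ri _.
apply: (filterS HU) UP _ => i UPi v tv vs.
have /eqP vE : take (size v) s == v by rewrite -prefixE.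
by rewrite -vE; apply: UPi; apply: size_prefix.
Qed.

Lemma graft_ext s : S s -> prefix t s -> U (fun i => S (rcons s (a s i))).
Proof.
move=> Ss ts; have [Ts _ Rs] := Ss; have [_ _ T_ext] := AT.
have Gs := (Rs s ts (prefix_refl s)).1.
apply: (filterS HU) (filterI HU (T_ext s Ts (prefix_trans st_t ts))
  (filterI HU (G_ext Ts ts Gs) (filter_graft_ext Ss ts))) _.
move=> i [Tsi [Gsi Rsi]]; split=> //.
  by rewrite /prefix_comparable (prefix_trans ts (prefix_rcons s _)) orbT.
move=> v tv /prefix_rconsE[-> | vs]; last by split; [case: (Rs v tv vs) | apply: Rsi].
by split=> //; case: (R_sub Tsi (prefix_trans ts (prefix_rcons s _)) Gsi).
Qed.

Lemma graft_alpha_tree : alpha_tree_at S t.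
Proof.
have [T_tree _ _] := AT.
have S_tree := graft_tree; have St := graft_root.
have [x [y [xy Sx Sy]]] :=
  nonstandard_two_values HU (P := fun x => S (rcons t x)) (Ha (tree_fin T_tree Tt))
    (graft_ext St (prefix_refl t)).
split=> //; last exact: graft_ext.
by apply: stem_intro S_tree St _ xy Sx Sy => u [].
Qed.

End Graft.

Lemma alpha_tree_body T st : alpha_tree_at T st -> exists X, body T X.
Proof.
move=> [T_tree Tst T_ext].
have [nxt nxtP] : exists nxt : seq nat -> nat, forall s, T s -> prefix st s ->
    T (rcons s (nxt s)) /\ size s < nxt s.
  apply: (choice (fun s x => T s -> prefix st s -> T (rcons s x) /\ size s < x)) => s.
  case: (classic (T s /\ prefix st s)) => [[Ts st_s] | nTs]; last by exists 0 => *; case: nTs.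
  have s_big := nonstandard_gt HU (Ha (tree_fin T_tree Ts)) (size s).
  by have [i []] := filter_ex HU (filterI HU (T_ext s Ts st_s) s_big); exists (a s i).
pose b n := iter n (fun s => rcons s (nxt s)) st.
have b_tree n : [/\ T (b n), prefix st (b n) & n <= size (b n)].
  elim: n => [|n [Tb st_b nb]]; first by split; [exact: stem_mem Tst | exact: prefix_refl |].
  have [Tb' lt_b] := nxtP _ Tb st_b; split=> //=; last by rewrite size_rcons.
  exact: prefix_trans st_b (prefix_rcons _ _).
apply: (@chain_body _ b T_tree) => [n | n]; first by case: (b_tree n).
have [Tb st_b nb] := b_tree n; exists (nxt (b n)) => //.
exact: leq_ltn_trans nb (nxtP _ Tb st_b).2.
Qed.

Lemma alpha_tree_meet T R st stR t : alpha_tree_at T st -> alpha_tree_at R stR ->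
  T t -> R t -> prefix st t -> prefix stR t ->
  exists S, [/\ alpha_tree_at S t, (forall u, S u -> T u) & (forall u, S u -> R u)].
Proof.
move=> AT AR Tt Rt st_t stR_t; have [T_tree _ T_ext] := AT.
have R_sub v : R v -> prefix t v -> T v -> alpha_subtree_at R T (fun=> True) v.
  by move=> *; apply: alpha_subtree_at_all.
exists (graft R t T (fun _ _ => True)); split; last exact: graft_sub.
  apply: graft_alpha_tree AR Rt stR_t Tt _ R_sub => s _ ts Ts.
  exact: T_ext s Ts (prefix_trans st_t ts).
move=> u [Ru /orP[ut | tu] Tu]; first exact: tree_prefix T_tree Tt ut.
exact: (Tu u tu (prefix_refl u)).1.
Qed.

Lemma graft_successors T st t (P : seq nat -> Prop) (W : seq nat -> seq nat -> Prop) :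
  alpha_tree_at T st -> T t -> prefix st t -> U (fun i => P (rcons t (a t i))) ->
  (forall v, P v -> alpha_tree_at (W v) v) ->
  exists S, [/\ alpha_tree_at S t, (forall u, S u -> T u) &
    forall X, body S X -> exists2 v, P v & body (W v) X].
Proof.
move=> AT Tt st_t UP AW.
(* [W v] is attached exactly at the successors v of t satisfying P, and G keeps
   only the nodes passing through such a successor. *)
pose G v := v = t \/ P (take (size t).+1 v).
pose R v u := P v /\ size v = (size t).+1 -> W v u.
have G_ext s : T s -> prefix t s -> G s -> U (fun i => G (rcons s (a s i))).
  move=> Ts ts Gs; case: (eqVneq s t) => [-> | st'].
    by apply: (filterS HU) UP _ => i Pi; right; rewrite take_oversize // size_rcons.
  have lt_ts := size_prefix_lt ts (elimN eqP st').
  case: Gs => [/eqP | Ps]; first by rewrite (negbTE st').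
  by apply: (filterT HU) => i; right; rewrite -cats1 takel_cat.
have R_sub v : T v -> prefix t v -> G v -> alpha_subtree_at T G (R v) v.
  move=> _ _ _; split.
  - by move=> [/AW[_ Wv _] _]; apply: stem_mem Wv.
  - move=> u w Rvu wu _ Pv; have [W_tree _ _] := AW v Pv.1.
    exact: tree_prefix W_tree (Rvu Pv) wu.
  - move=> s Rvs vs _ _; case: (classic (P v /\ size v = (size t).+1)) => [Pv | nPv].
      have [_ _ W_ext] := AW v Pv.1.
      by apply: (filterS HU) (W_ext s (Rvs Pv) vs) _ => i Wi _.
    by apply: (filterT HU) => i /nPv.
have AS := graft_alpha_tree AT Tt st_t (or_introl erefl) G_ext R_sub.
exists (graft T t G R); split=> // [u /graft_sub // | X SX].
have [S_tree S_stem _] := AS.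
have [k [tk t_k]] := body_initseg_stem S_tree S_stem SX (size t).+1.
pose v := take (size t).+1 (initseg X k).
have t_v : prefix t v := prefix_take_leq t_k (leqnSn _).
have v_k : prefix v (initseg X k) := prefix_take _ _.
have v_size : size v = (size t).+1 by rewrite size_takel.
have [_ _ /(_ v t_v v_k) [Gv Rv]] := body_initseg k SX.
have Pv : P v.
  case: Gv => [vt | ]; first by move: v_size; rewrite vt; lia.
  by rewrite -v_size take_size.
exists v => //; have [W_tree W_stem _] := AW v Pv.
apply: body_above W_tree SX.1 v_k (stem_mem W_stem) _ => k' v_k'.
by have [_ _ /(_ v t_v v_k') [_ /(_ (conj Pv v_size))]] := body_initseg k' SX.
Qed.

Section OpenRamsey.
Variables (T : seq nat -> Prop) (st : seq nat) (O : (nat -> bool) -> Prop).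
Hypotheses (AT : alpha_tree_at T st) (HO : aE_open U a O).

Definition accepted t :=
  exists S, [/\ alpha_tree_at S t, (forall u, S u -> T u) & forall X, body S X -> O X].

Lemma accepted_succ t : T t -> prefix st t ->
  U (fun i => accepted (rcons t (a t i))) -> accepted t.
Proof.
move=> Tt st_t Uacc.
have [W WP] : exists W, forall v, accepted v ->
    [/\ alpha_tree_at (W v) v, (forall u, W v u -> T u) & forall X, body (W v) X -> O X].
  apply: (choice (fun v Wv => accepted v -> [/\ alpha_tree_at Wv v,
    forall u, Wv u -> T u & forall X, body Wv X -> O X])) => v.
  by case: (classic (accepted v)) => [[Wv Wv_acc] | nacc]; [exists Wv | exists T].
have AW v : accepted v -> alpha_tree_at (W v) v by case/WP.
have [S [AS ST SW]] := graft_successors AT Tt st_t Uacc AW.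
exists S; split=> // X /SW[v /WP[_ _ WO]]; exact: WO.
Qed.

Lemma accepted_initseg X : body T X -> O X ->
  exists k, prefix st (initseg X k) /\ accepted (initseg X k).
Proof.
move=> TX OX; have [T_tree T_stem _] := AT.
have [_ /(_ X OX) [R [/alpha_treeP[stR AR] RX RO]]] := HO.
have [R_tree R_stem _] := AR.
have [k [k_size st_k]] := body_initseg_stem T_tree T_stem TX (size stR).
have Rk := body_initseg k RX.
have stR_k : prefix stR (initseg X k).
  apply: prefix_comparable_size k_size; rewrite prefix_comparableC.
  exact: stem_comparable R_tree R_stem Rk.
have [S [AS ST SR]] := alpha_tree_meet AT AR (body_initseg k TX) Rk st_k stR_k.
by exists k; split=> //; exists S; split=> // Y /(body_sub SR)/RO.
Qed.

Lemma open_alpha_Ramsey : exists S, [/\ alpha_tree_at S st, (forall u, S u -> T u) &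
  (forall X, body S X -> O X) \/ (forall X, body S X -> ~ O X)].
Proof.
case: (classic (accepted st)) => [[S [AS ST SO]] | nacc]; first by exists S; split; [| | left].
have [_ T_stem _] := AT.
have G_ext s : T s -> prefix st s -> ~ accepted s -> U (fun i => ~ accepted (rcons s (a s i))).
  move=> Ts st_s nacc_s; case: (filter_compl HU (fun i => accepted (rcons s (a s i)))) => //.
  by move/(accepted_succ Ts st_s).
have R_sub v : T v -> prefix st v -> ~ accepted v ->
    alpha_subtree_at T (fun v => ~ accepted v) (fun=> True) v.
  by move=> *; apply: alpha_subtree_at_all.
have AS := graft_alpha_tree AT (stem_mem T_stem) (prefix_refl st) nacc G_ext R_sub.
exists (graft T st (fun v => ~ accepted v) (fun _ _ => True)); split=> //; first exact: graft_sub.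
right=> X SX /(accepted_initseg (body_sub (@graft_sub _ _ _ _) SX))[k [st_k acc_k]].
by have [_ _ /(_ _ st_k (prefix_refl _)) []] := body_initseg k SX.
Qed.

End OpenRamsey.

Lemma body_open S : alpha_tree U a S -> aE_open U a (body S).
Proof. by move=> AS; split=> [X [] | X SX]; last by exists S. Qed.

Definition aE_interior (P : (nat -> bool) -> Prop) X :=
  exists R, [/\ alpha_tree U a R, body R X & forall Y, body R Y -> P Y].

Lemma aE_interior_open P : aE_open U a (aE_interior P).
Proof.
split=> [X [R [_ [] //]] | X [R [AR RX RP]]].
by exists R; split=> // Y RY; exists R.
Qed.

Lemma null_nowhere_dense N : alpha_Ramsey_null U a N -> aE_nowhere_dense U a N.
Proof.
move=> Nnull O [_ O_open] O_cl X OX; have [R [AR RX RO]] := O_open X OX.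
have [S [AS SR _ SN]] := Nnull R AR.
have [stS /alpha_tree_body[Y SY]] := (alpha_treeP S).1 AS.
have [_ /(_ _ (body_open AS) SY)[Z [SZ NZ]]] := O_cl Y (RO Y (body_sub SR SY)).
exact: SN Z SZ NZ.
Qed.

Lemma nowhere_dense_null N : aE_nowhere_dense U a N -> alpha_Ramsey_null U a N.
Proof.
move=> Nnd T /alpha_treeP[st AT].
have [S [AS ST SO]] := open_alpha_Ramsey AT (aE_interior_open (fun Y => ~ N Y)).
exists S; split=> //; first exact: alpha_tree_atW AS.
  by exists st; split; [case: AT | case: AS].
case: SO => [SO X /SO[R [_ RX RN]] | SnO]; first exact: RN.
have [X SX] := alpha_tree_body AS; exfalso.
apply: (Nnd _ (body_open (alpha_tree_atW AS)) _ X SX) => Y SY.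
split=> [|O [_ O_open] OY]; first by case: SY.
apply: NNPP => nmeet; have [R [AR RY RO]] := O_open Y OY.
by apply: (SnO Y SY); exists R; split=> // Z RZ NZ; apply: nmeet; exists Z; split=> //; apply: RO.
Qed.

Lemma null_subtree N T st t : alpha_Ramsey_null U a N -> alpha_tree_at T st ->
  T t -> prefix st t ->
  exists S, [/\ alpha_tree_at S t, (forall u, S u -> T u) & forall X, body S X -> ~ N X].
Proof.
move=> Nnull AT Tt st_t; have [S0 [A0 S0T _]] := alpha_tree_meet AT AT Tt Tt st_t st_t.
have [S [AS SS0 [t' [S0_t' S_t']] SN]] := Nnull S0 (alpha_tree_atW A0).
have [_ S0_t _] := A0; rewrite -(stem_unique S0_t S0_t') in S_t'.
exists S; split=> //; last by move=> u /SS0/S0T.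
exact: alpha_tree_stem AS S_t'.
Qed.

Lemma null_bigcup (Ns : nat -> (nat -> bool) -> Prop) :
  (forall n, alpha_Ramsey_null U a (Ns n)) -> alpha_Ramsey_null U a (fun X => exists n, Ns n X).
Proof.
move=> Nnull T /alpha_treeP[st AT]; have [T_tree T_stem _] := AT.
have [R RP] : exists R, forall v, T v -> prefix st v ->
    [/\ alpha_tree_at (R v) v, (forall u, R v u -> T u)
      & forall X, body (R v) X -> ~ Ns (size v - size st) X].
  apply: (choice (fun v Rv => T v -> prefix st v -> [/\ alpha_tree_at Rv v,
    forall u, Rv u -> T u & forall X, body Rv X -> ~ Ns (size v - size st) X])) => v.
  case: (classic (T v /\ prefix st v)) => [[Tv st_v] | nv]; last by exists T => Tv st_v; case: nv.
  by have [S ?] := null_subtree (Nnull (size v - size st)) AT Tv st_v; exists S.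
have R_sub v : T v -> prefix st v -> True -> alpha_subtree_at T (fun=> True) (R v) v.
  move=> Tv st_v _; have [[R_tree R_stem R_ext] _ _] := RP v Tv st_v; split.
  - exact: stem_mem R_stem.
  - by move=> u w Ru wu _; apply: tree_prefix R_tree Ru wu.
  - by move=> s Rs vs _ _; apply: R_ext.
have AS := graft_alpha_tree AT (stem_mem T_stem) (prefix_refl st) I
  (fun _ _ _ _ => filterT HU (fun _ => I)) R_sub.
exists (graft T st (fun=> True) R); split; first exact: alpha_tree_atW AS.
- exact: graft_sub.
- by exists st; split=> //; case: AS.
move=> X SX [n NX]; have [S_tree S_stem _] := AS.
have [k [k_size st_k]] := body_initseg_stem S_tree S_stem SX (size st + n).
pose v := take (size st + n) (initseg X k).
have st_v : prefix st v := prefix_take_leq st_k (leq_addr _ _).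
have v_k : prefix v (initseg X k) := prefix_take _ _.
have Tv := tree_prefix T_tree (graft_sub (body_initseg k SX)) v_k.
have [[R_tree R_stem _] _ RN] := RP v Tv st_v.
apply: (RN X); last by rewrite size_takel // addKn.
apply: body_above R_tree SX.1 v_k (stem_mem R_stem) _ => k' v_k'.
by have [_ _ /(_ v st_v v_k') []] := body_initseg k' SX.
Qed.

Lemma null_meager N : alpha_Ramsey_null U a N -> aE_meager U a N.
Proof.
move=> Nnull; exists (fun=> N).
by split=> [_ | X NX]; [apply: null_nowhere_dense | exists 0].
Qed.

Lemma meager_null N : aE_meager U a N -> alpha_Ramsey_null U a N.
Proof.
move=> [Ns [Ns_nd N_sub]] T AT.
have [S [AS ST stS SN]] := null_bigcup (fun n => nowhere_dense_null (Ns_nd n)) AT.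
by exists S; split=> // X SX /N_sub; apply: SN.
Qed.

Lemma Baire_alpha_Ramsey XX : aE_Baire U a XX -> alpha_Ramsey U a XX.
Proof.
move=> [O [HO /meager_null Dnull]] T AT.
have [T1 [A1 T1T [st [T_st T1_st]] T1D]] := Dnull T AT.
have [S [AS ST1 SO]] := open_alpha_Ramsey (alpha_tree_stem A1 T1_st) HO.
exists S; split; first exact: alpha_tree_atW AS.
- by move=> u /ST1/T1T.
- by exists st; split=> //; case: AS.
by case: SO => SO; [left | right] => X SX; have := T1D X (body_sub ST1 SX); have := SO X SX; tauto.
Qed.

Lemma alpha_Ramsey_Baire XX : alpha_Ramsey U a XX -> aE_Baire U a XX.
Proof.
move=> XX_Ramsey; exists (aE_interior XX); split; first exact: aE_interior_open.
apply: null_meager => T AT; have [S [AS ST stS SXX]] := XX_Ramsey T AT.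
exists S; split=> // X SX; case: SXX => SXX; have XX_X := SXX X SX.
  have : aE_interior XX X by exists S.
  tauto.
have : ~ aE_interior XX X by move=> [R [_ RX /(_ X RX)]].
tauto.
Qed.

End AlphaTrees.

Theorem mainTheorem5
  (U : (nat -> Prop) -> Prop) (HU : nonprincipal_ultrafilter U)
  (a : seq nat -> nat -> nat) (Ha : forall s, is_fin s -> nonstandard U (a s))
  (XX : (nat -> bool) -> Prop) (HXX : forall X, XX X -> infinite_set X) :
  (alpha_Ramsey U a XX <-> aE_Baire U a XX) /\
  (alpha_Ramsey_null U a XX <-> aE_meager U a XX).
Proof.
have [HU' _] := HU.
split; split.
- exact: alpha_Ramsey_Baire HU' Ha XX.
- exact: Baire_alpha_Ramsey HU' Ha XX.
- exact: null_meager HU' Ha XX.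
- exact: meager_null HU' Ha XX.
Qed.
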